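(* Let $L$ be an invertible linear map of $\mathbb{C}^n$ with eigenvalues $\lambda_1,\dots,\lambda_n$ satisfying $0<|\lambda_1|<\dots<|\lambda_n|<1$. For every $r\ge 1$, \[ SR_r(L)+\mathrm{Im}(M_L^r)=\mathcal{H}^r, \] where $M_L^r:\mathcal{H}^r\to\mathcal{H}^r$ is $h\mapsto h\circ L-L\circ h$.
   Context: $E^{\lambda}(L)$ is the characteristic subspace of $L$ for the eigenvalue $\lambda$; here $\mathbb{C}^n=E^{\lambda_1}(L)\oplus\cdots\oplus E^{\lambda_n}(L)$. $\mathcal{H}^r$ is the vector space of homogeneous polynomial maps of degree $r$ from $\mathbb{C}^n$ to $\mathbb{C}^n$. A homogeneous polynomial map $Q$ with $Q(0)=0$ is of type $s=(s_1,\dots,s_n)$ if for all $a_1,\dots,a_n\in\mathbb{C}$ and $(t_1,\dots,t_n)\in E^{\lambda_1}(L)\times\cdots\times E^{\lambda_n}(L)$, $Q(a_1t_1+\dots+a_nt_n)=a_1^{s_1}\cdots a_n^{s_n}Q(t_1+\dots+t_n)$. A polynomial map $P$ with $P(0)=0$ is of sub-resonance type with respect to $L$ if for each $i$ its component $P_i:\mathbb{C}^n\to E^{\lambda_i}(L)$ consists only of homogeneous terms of types $s$ with $\ln|\lambda_i|\le\sum_j s_j\ln|\lambda_j|$. $SR_r(L)$ denotes the set of elements of $\mathcal{H}^r$ that are of sub-resonance type with respect to $L$. *)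

From mathcomp Require Import all_boot all_order all_algebra.
From mathcomp Require Export complex.
From mathcomp Require Export reals exp.
Set Implicit Arguments. Unset Strict Implicit. Unset Printing Implicit Defensive.
Import GRing.Theory Num.Theory.
Local Open Scope ring_scope.

Section Defs.
Variables (R : realType) (n : nat).
Local Notation C := (R[i]).
Local Notation V := ('cV[C]_n).

Definition cmod (z : C) : R := Normc.normc z.

Definition is_hpoly (r : nat) (f : V -> V) : Prop :=
  exists c : {ffun 'I_n -> 'I_r.+1} -> V,
    forall x : V,
      f x = \sum_(a : {ffun 'I_n -> 'I_r.+1} | (\sum_(j < n) (a j : nat))%N == r)
              (\prod_(j < n) (x j 0) ^+ (a j)) *: c a.

Definition charsp (L : 'M[C]_n) (lam : C) (x : V) : Prop :=
  ((L - lam%:M) ^+ n) *m x = 0.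

Definition is_of_type (L : 'M[C]_n) (lam : 'I_n -> C) (s : 'I_n -> nat)
    (Q : V -> V) : Prop :=
  forall (a : 'I_n -> C) (t : 'I_n -> V),
    (forall j, charsp L (lam j) (t j)) ->
    Q (\sum_(j < n) a j *: t j) = (\prod_(j < n) a j ^+ s j) *: Q (\sum_(j < n) t j).

Definition sub_resonance (L : 'M[C]_n) (lam : 'I_n -> C) (P : V -> V) : Prop :=
  P 0 = 0 /\
  exists (m : nat) (s : 'I_n -> 'I_m -> 'I_n -> nat) (Q : 'I_n -> 'I_m -> V -> V),
    (forall i k,
        (exists d, is_hpoly d (Q i k)) /\ Q i k 0 = 0 /\
        (forall x, charsp L (lam i) (Q i k x)) /\
        is_of_type L lam (s i k) (Q i k) /\
        ln (cmod (lam i)) <= \sum_(j < n) (s i k j)%:R * ln (cmod (lam j))) /\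
    forall x, P x = \sum_(i < n) \sum_(k < m) Q i k x.

Definition SR (L : 'M[C]_n) (lam : 'I_n -> C) (r : nat) (P : V -> V) : Prop :=
  is_hpoly r P /\ sub_resonance L lam P.

Definition ML (L : 'M[C]_n) (h : V -> V) : V -> V :=
  fun x => h (L *m x) - L *m h x.

End Defs.

From mathcomp Require Import all_boot all_order all_algebra.
From mathcomp Require Import complex reals exp.
Import Order.POrderTheory GRing.Theory Num.Theory.
Local Open Scope ring_scope.
Set Implicit Arguments. Unset Strict Implicit. Unset Printing Implicit Defensive.

(* Since the moduli |lam_j| are distinct, L has n distinct eigenvalues and is
   diagonalised by eigenvectors v_i; write y = U x for the dual coordinates.
   In these coordinates every homogeneous map of degree r is a combination of
   the monomial maps x |-> y^a v_i with |a| = r, and each of them is an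
   eigenvector of M_L with eigenvalue lam^a - lam_i.  The non-resonant ones
   (lam^a <> lam_i) therefore lie in the image of M_L, while a resonant one
   takes values in E^{lam_i}(L), has type a and satisfies
   ln|lam_i| = sum_j a_j ln|lam_j|, so it is of sub-resonance type. *)

Section Homogeneous.
Variables (K : comNzRingType) (n : nat).
Local Notation V := 'cV[K]_n.

Definition monomial (a : 'I_n -> nat) (x : V) : K := \prod_j x j 0 ^+ a j.

Definition homogeneous (W : lmodType K) (d : nat) (f : V -> W) : Prop :=
  exists (I : finType) (a : I -> 'I_n -> nat) (c : I -> W),
    (forall k, \sum_j a k j = d)%N /\ forall x, f x = \sum_k monomial (a k) x *: c k.

Lemma monomialD a b x :
  monomial (fun j => a j + b j)%N x = monomial a x * monomial b x.
Proof. by rewrite /monomial -big_split; apply: eq_bigr => j _; rewrite exprD. Qed.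

Lemma monomial0 a : (0 < \sum_j a j)%N -> monomial a 0 = 0.
Proof.
rewrite lt0n sum_nat_eq0 => /forallPn[j /= aj_neq0].
by rewrite /monomial (bigD1 j) //= mxE expr0n (negbTE aj_neq0) mul0r.
Qed.

Section Module.
Variable W : lmodType K.
Implicit Types f g : V -> W.

Lemma eq_homogeneous d f g : f =1 g -> homogeneous d f -> homogeneous d g.
Proof.
by move=> fg [I [a [c [deg_a f_eq]]]]; exists I, a, c; split=> // x; rewrite -fg.
Qed.

Lemma homogeneous0 d : homogeneous d (fun _ => 0 : W).
Proof.
by exists 'I_0, (fun _ _ => 0%N), (fun _ => 0); split=> [[]|x] //; rewrite big_ord0.
Qed.

Lemma homogeneousD d f g :
  homogeneous d f -> homogeneous d g -> homogeneous d (fun x => f x + g x).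
Proof.
move=> [I [a [c [deg_a f_eq]]]] [J [b [e [deg_b g_eq]]]].
exists (I + J)%type, (fun k => match k with inl k => a k | inr k => b k end),
  (fun k => match k with inl k => c k | inr k => e k end).
by split=> [[]|x] //; rewrite big_sumType f_eq g_eq.
Qed.

Lemma homogeneous_sum d (I : Type) (s : seq I) (F : I -> V -> W) :
  (forall i, homogeneous d (F i)) -> homogeneous d (fun x => \sum_(i <- s) F i x).
Proof.
move=> hF; elim: s => [|i s IHs].
  by apply: eq_homogeneous (homogeneous0 d) => x; rewrite big_nil.
by apply: eq_homogeneous (homogeneousD (hF i) IHs) => x; rewrite big_cons.
Qed.

Lemma homogeneous_linear d (W' : lmodType K) (phi : {linear W -> W'}) f :
  homogeneous d f -> homogeneous d (phi \o f).
Proof.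
move=> [I [a [c [deg_a f_eq]]]]; exists I, a, (phi \o c); split=> // x.
by rewrite /= f_eq linear_sum; apply: eq_bigr => k _; rewrite linearZ.
Qed.

Lemma homogeneousZ d (t : K) f :
  homogeneous d f -> homogeneous d (fun x => t *: f x).
Proof. exact: (@homogeneous_linear d W ( *:%R t)). Qed.

Lemma homogeneous_ord d f : homogeneous d f ->
  exists m (a : 'I_m -> 'I_n -> nat) (c : 'I_m -> W),
    (forall k, \sum_j a k j = d)%N /\ forall x, f x = \sum_k monomial (a k) x *: c k.
Proof.
move=> [I [a [c [deg_a f_eq]]]].
exists #|I|, (a \o enum_val), (c \o enum_val); split=> [k|x]; first exact: deg_a.
rewrite f_eq; transitivity (\sum_(k in I) monomial (a k) x *: c k).
  by apply: eq_bigl => k; rewrite inE.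
by rewrite big_enum_val.
Qed.

End Module.

Local Notation scalar_homogeneous := (@homogeneous K^o).

Lemma homogeneousM d1 d2 (g1 g2 : V -> K) :
  scalar_homogeneous d1 g1 -> scalar_homogeneous d2 g2 ->
  scalar_homogeneous (d1 + d2) (fun x => g1 x * g2 x).
Proof.
move=> [I [a [c [deg_a g1_eq]]]] [J [b [e [deg_b g2_eq]]]].
exists (I * J)%type, (fun k j => a k.1 j + b k.2 j)%N, (fun k => c k.1 * e k.2).
split=> [k|x]; first by rewrite big_split /= deg_a deg_b.
rewrite g1_eq g2_eq big_distrlr pair_bigA; apply: eq_bigr => k _ /=.
by rewrite monomialD [RHS]mulrACA.
Qed.

Lemma homogeneous1 : scalar_homogeneous 0 (fun _ => 1).
Proof.
exists 'I_1, (fun _ _ => 0%N), (fun _ => 1); split=> [_|x]; first by rewrite big1.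
by rewrite big_ord1 /monomial big1 ?scale1r // => j _; rewrite expr0.
Qed.

Lemma homogeneousX d e (g : V -> K) :
  scalar_homogeneous d g -> scalar_homogeneous (d * e) (fun x => g x ^+ e).
Proof.
move=> hg; elim: e => [|e IHe].
  by rewrite muln0; apply: eq_homogeneous homogeneous1 => x; rewrite expr0.
by rewrite mulnS; apply: eq_homogeneous (homogeneousM hg IHe) => x; rewrite exprS.
Qed.

Lemma homogeneous_prod (I : Type) (s : seq I) (e : I -> nat) (F : I -> V -> K) :
  (forall i, scalar_homogeneous (e i) (F i)) ->
  scalar_homogeneous (\sum_(i <- s) e i) (fun x => \prod_(i <- s) F i x).
Proof.
move=> hF; elim: s => [|i s IHs].
  by rewrite big_nil; apply: eq_homogeneous homogeneous1 => x; rewrite big_nil.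
rewrite big_cons; apply: eq_homogeneous (homogeneousM (hF i) IHs) => x.
by rewrite big_cons.
Qed.

Lemma homogeneous_coord_mulmx (A : 'M[K]_n) i :
  scalar_homogeneous 1 (fun x => (A *m x) i 0).
Proof.
exists 'I_n, (fun k j => (j == k) : nat), (fun k => A i k); split=> [k|x].
  by rewrite (bigD1 k) //= eqxx big1 // => j /negbTE ->.
rewrite mxE; apply: eq_bigr => k _; rewrite mulrC /monomial (bigD1 k) //= eqxx.
by rewrite big1 ?mulr1 // => j /negbTE ->.
Qed.

Lemma homogeneous_monomial_mulmx (A : 'M[K]_n) a :
  scalar_homogeneous (\sum_j a j) (fun x => monomial a (A *m x)).
Proof.
apply: homogeneous_prod => j.
by have := homogeneousX (a j) (homogeneous_coord_mulmx A j); rewrite mul1n.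
Qed.

Lemma homogeneous_scale (W : lmodType K) d (g : V -> K) (v : W) :
  scalar_homogeneous d g -> homogeneous d (fun x => g x *: v).
Proof.
move=> [I [a [c [deg_a g_eq]]]]; exists I, a, (fun k => c k *: v); split=> // x.
by rewrite g_eq scaler_suml; apply: eq_bigr => k _; rewrite scalerA.
Qed.

Lemma homogeneous_comp_mulmx (W : lmodType K) d (f : V -> W) (A : 'M[K]_n) :
  homogeneous d f -> homogeneous d (fun x => f (A *m x)).
Proof.
move=> [I [a [c [deg_a f_eq]]]].
apply: eq_homogeneous (homogeneous_sum _ (fun k => homogeneous_scale (c k) _)).
  by move=> x; rewrite f_eq.
by move=> k; rewrite -(deg_a k); apply: homogeneous_monomial_mulmx.
Qed.

End Homogeneous.

Lemma is_hpolyP (R : realType) n r (f : 'cV[R[i]]_n -> 'cV[R[i]]_n) :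
  is_hpoly r f <-> homogeneous r f.
Proof.
split=> [[c f_eq] | [I [a [c [deg_a f_eq]]]]].
  have : homogeneous r (fun x => \sum_(b : {ffun 'I_n -> 'I_r.+1})
      if (\sum_j (b j : nat))%N == r then monomial (fun j => b j) x *: c b else 0).
    apply: homogeneous_sum => b; case: eqP => [deg_b|_]; last exact: homogeneous0.
    exists 'I_1, (fun _ j => b j : nat), (fun _ => c b).
    by split=> [_|x]; rewrite ?big_ord1.
  by apply: eq_homogeneous => x; rewrite f_eq [RHS]big_mkcond.
have a_bound k j : (a k j < r.+1)%N by rewrite ltnS -(deg_a k) (bigD1 j) ?leq_addr.
pose b k : {ffun 'I_n -> 'I_r.+1} := [ffun j => Ordinal (a_bound k j)].
exists (fun b' => \sum_(k | b k == b') c k) => x.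
rewrite f_eq (partition_big b (fun b' => (\sum_j (b' j : nat))%N == r)) => [|k _].
  apply: eq_bigr => b' _; rewrite scaler_sumr; apply: eq_bigr => k /eqP <-.
  by congr (_ *: _); apply: eq_bigr => j _; rewrite ffunE.
by apply/eqP; rewrite -[RHS](deg_a k); apply: eq_bigr => j _; rewrite ffunE.
Qed.

Section Eigenbasis.
Variables (K : fieldType) (n : nat) (L : 'M[K]_n) (lam : 'I_n -> K).
Variable u : 'I_n -> 'rV[K]_n.
Hypothesis lam_inj : injective lam.
Hypothesis u_eigen : forall j, u j *m L = lam j *: u j.
Hypothesis u_neq0 : forall j, u j != 0.

Lemma mulmx_prod_sub_eigen (w : 'rV[K]_n) mu (I : Type) (s : seq I) (P : pred I)
    (c : I -> K) :
  w *m L = mu *: w ->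
  w *m \prod_(i <- s | P i) (L - (c i)%:M) = (\prod_(i <- s | P i) (mu - c i)) *: w.
Proof.
move=> w_eigen; elim: s => [|i s IHs]; first by rewrite !big_nil mulmx1 scale1r.
rewrite !big_cons; case: (P i) => //.
by rewrite -mulmxE mulmxA mulmxBr w_eigen mul_mx_scalar -scalerBl -scalemxAl IHs scalerA.
Qed.

Lemma mulmx_exp_sub_eigen (w : 'rV[K]_n) mu c e :
  w *m L = mu *: w -> w *m (L - c%:M) ^+ e = (mu - c) ^+ e *: w.
Proof.
rewrite -(subn0 e) -!prodr_const_nat; exact: mulmx_prod_sub_eigen.
Qed.

Definition eigen_mx : 'M[K]_n := \matrix_j u j.
Local Notation U := eigen_mx.

Lemma eigen_mx_free (y : 'rV[K]_n) : y *m U = 0 -> y = 0.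
Proof.
move=> yU0; apply/rowP => j; rewrite mxE.
pose Pj := \prod_(k < n | k != j) (L - (lam k)%:M).
have /(congr1 (mulmx^~ Pj)) := yU0; rewrite mul0mx (mulmx_sum_row y) mulmx_suml.
rewrite (bigD1 j) //= big1 => [|k kj]; last first.
  rewrite rowK -scalemxAl (mulmx_prod_sub_eigen _ _ _ (u_eigen k)) (bigD1 k) //=.
  by rewrite subrr mul0r !scale0r scaler0.
rewrite addr0 rowK -scalemxAl (mulmx_prod_sub_eigen _ _ _ (u_eigen j)) scalerA.
move/eqP; rewrite scaler_eq0 (negbTE (u_neq0 j)) orbF mulf_eq0 => /predU1P[//|].
move/eqP; apply: contra_eq => _; apply/prodf_neq0 => k kj.
by rewrite subr_eq0 (inj_eq lam_inj) eq_sym.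
Qed.

Lemma eigen_mx_unit : U \in unitmx.
Proof.
rewrite -row_free_unit -kermx_eq0; apply/eqP/row_matrixP => i.
by rewrite row0; apply: eigen_mx_free; rewrite -row_mul mulmx_ker row0.
Qed.

Lemma eigen_coordE (z : 'cV[K]_n) k : (U *m z) k 0 = (u k *m z) 0 0.
Proof. by rewrite -rowK -row_mul [RHS]mxE. Qed.

Lemma eigen_coord_mulmx (z : 'cV[K]_n) k :
  (U *m (L *m z)) k 0 = lam k * (U *m z) k 0.
Proof. by rewrite !eigen_coordE mulmxA u_eigen -scalemxAl mxE. Qed.

Lemma eigen_coord_ker j e (t : 'cV[K]_n) k :
  (L - (lam j)%:M) ^+ e *m t = 0 -> k != j -> (U *m t) k 0 = 0.
Proof.
move=> t_ker kj; have := congr1 (mulmx (u k)) t_ker.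
rewrite mulmxA (mulmx_exp_sub_eigen _ _ (u_eigen k)) mulmx0 -scalemxAl.
move/rowP/(_ 0); rewrite mxE [RHS]mxE eigen_coordE => /eqP.
by rewrite mulf_eq0 expf_eq0 subr_eq0 (inj_eq lam_inj) (negbTE kj) andbF => /eqP.
Qed.

Lemma eigen_coord_sum e (b : 'I_n -> K) (t : 'I_n -> 'cV[K]_n) k :
  (forall j, (L - (lam j)%:M) ^+ e *m t j = 0) ->
  (U *m \sum_j b j *: t j) k 0 = b k * (U *m t k) k 0.
Proof.
move=> t_ker; rewrite mulmx_sumr summxE (bigD1 k) //= big1 ?addr0 => [|j jk].
  by rewrite -scalemxAr mxE.
by rewrite -scalemxAr mxE (eigen_coord_ker (t_ker j)) ?mulr0 // eq_sym.
Qed.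

Definition eigen_col i : 'cV[K]_n := col i (invmx U).

Lemma eigen_coord_col i k : (U *m eigen_col i) k 0 = (k == i)%:R.
Proof. by rewrite /eigen_col colE mulmxA mulmxV ?eigen_mx_unit // mul1mx mxE andbT. Qed.

Lemma mulmx_eigen_col i : L *m eigen_col i = lam i *: eigen_col i.
Proof.
apply: (can_inj (mulKmx eigen_mx_unit)); apply/colP => k.
rewrite eigen_coord_mulmx -scalemxAr [RHS]mxE !eigen_coord_col.
by case: eqP => [->|]; rewrite ?mulr0 ?mulr1.
Qed.

Lemma eigen_col_expansion (z : 'cV[K]_n) : z = \sum_j (U *m z) j 0 *: eigen_col j.
Proof.
apply: (can_inj (mulKmx eigen_mx_unit)); apply/colP => k.
rewrite mulmx_sumr summxE (bigD1 k) //= big1 => [|j jk].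
  by rewrite -scalemxAr [in RHS]mxE eigen_coord_col eqxx mulr1 addr0.
by rewrite -scalemxAr mxE eigen_coord_col eq_sym (negbTE jk) mulr0.
Qed.

End Eigenbasis.

Lemma ln_prod (R : realType) (I : Type) (s : seq I) (c : I -> R) :
  (forall i, 0 < c i) -> ln (\prod_(i <- s) c i) = \sum_(i <- s) ln (c i).
Proof.
move=> c_gt0; elim: s => [|i s IHs]; first by rewrite !big_nil ln1.
by rewrite !big_cons lnM ?IHs ?posrE ?prodr_gt0.
Qed.

Lemma cmodM (R : realType) : {morph @cmod R : z w / z * w}.
Proof. exact: Normc.normcM. Qed.

Lemma cmodX (R : realType) (z : R[i]) e : cmod (z ^+ e) = cmod z ^+ e.
Proof.
elim: e => [|e IHe]; first by rewrite !expr0 /cmod Normc.normc1.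
by rewrite !exprS cmodM IHe.
Qed.

Section Resonance.
Variables (R : realType) (n : nat) (L : 'M[R[i]]_n) (lam : 'I_n -> R[i]).
Variable u : 'I_n -> 'rV[R[i]]_n.
Hypothesis lam_inj : injective lam.
Hypothesis u_eigen : forall j, u j *m L = lam j *: u j.
Hypothesis u_neq0 : forall j, u j != 0.
Hypothesis lam_gt0 : forall j, 0 < cmod (lam j).
Local Notation C := R[i].
Local Notation V := 'cV[C]_n.
Local Notation U := (eigen_mx u).

Definition lam_monomial (a : 'I_n -> nat) : C := \prod_j lam j ^+ a j.

Definition eigen_monomial a i (x : V) : V := monomial a (U *m x) *: eigen_col u i.

Lemma monomial_eigen_mulmx a (x : V) :
  monomial a (U *m (L *m x)) = lam_monomial a * monomial a (U *m x).
Proof.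
rewrite /monomial -big_split; apply: eq_bigr => j _.
by rewrite (eigen_coord_mulmx u_eigen); apply: exprMn.
Qed.

Lemma ML_eigen_monomial a i x :
  ML L (eigen_monomial a i) x = (lam_monomial a - lam i) *: eigen_monomial a i x.
Proof.
rewrite /ML /eigen_monomial -scalemxAr (mulmx_eigen_col lam_inj u_eigen u_neq0).
by rewrite monomial_eigen_mulmx !scalerA -scalerBl [_ * lam i]mulrC mulrBl.
Qed.

Lemma homogeneous_eigen_monomial a i :
  homogeneous (\sum_j a j) (eigen_monomial a i).
Proof. exact/homogeneous_scale/homogeneous_monomial_mulmx. Qed.

Lemma eigen_monomial_expansion d (f : V -> V) : homogeneous d f ->
  exists m (a : 'I_m -> 'I_n -> nat) (c : 'I_n -> 'I_m -> C),
    (forall l, \sum_j a l j = d)%N /\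
    forall x, f x = \sum_i \sum_l c i l *: eigen_monomial (a l) i x.
Proof.
move=> /(homogeneous_comp_mulmx (invmx U))/homogeneous_ord[m [a [w [deg_a f_eq]]]].
exists m, a, (fun i l => (U *m w l) i 0); split=> // x.
rewrite -[x in f x](mulKmx (eigen_mx_unit lam_inj u_eigen u_neq0)) f_eq exchange_big.
apply: eq_bigr => l _; rewrite {1}(eigen_col_expansion lam_inj u_eigen u_neq0 (w l)).
by rewrite scaler_sumr; apply: eq_bigr => i _; rewrite /eigen_monomial !scalerA mulrC.
Qed.

Lemma ML_sum (I : Type) (s : seq I) (F : I -> V -> V) x :
  ML L (fun y => \sum_(k <- s) F k y) x = \sum_(k <- s) ML L (F k) x.
Proof. by rewrite /ML mulmx_sumr -sumrB. Qed.

Lemma MLZ (c : C) (h : V -> V) x : ML L (fun y => c *: h y) x = c *: ML L h x.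
Proof. by rewrite /ML -scalemxAr scalerBr. Qed.

Definition sub_resonant_term i (s : 'I_n -> nat) (Q : V -> V) : Prop :=
  (exists d, is_hpoly d Q) /\ Q 0 = 0 /\
  (forall x, charsp L (lam i) (Q x)) /\ is_of_type L lam s Q /\
  ln (cmod (lam i)) <= \sum_j (s j)%:R * ln (cmod (lam j)).

Lemma sub_resonance_sum m (s : 'I_n -> 'I_m -> 'I_n -> nat) Q (P : V -> V) :
  (forall i k, sub_resonant_term i (s i k) (Q i k)) ->
  (forall x, P x = \sum_i \sum_k Q i k x) -> sub_resonance L lam P.
Proof.
move=> Q_sr P_eq; split; last by exists m, s, Q.
by rewrite P_eq big1 // => i _; rewrite big1 // => k _; case: (Q_sr i k) => _ [].
Qed.

Lemma sub_resonant_term0 i : sub_resonant_term i (fun j => (j == i) : nat) (fun _ => 0).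
Proof.
split; first by exists 0%N; apply/is_hpolyP/homogeneous0.
split=> //; split=> [x|]; first by rewrite /charsp mulmx0.
split=> [b t _|]; first by rewrite scaler0.
by rewrite (bigD1 i) //= eqxx mul1r big1 ?addr0 // => j /negbTE ->; rewrite mul0r.
Qed.

Lemma charsp_eigen_col i (c : C) : charsp L (lam i) (c *: eigen_col u i).
Proof.
have n_gt0 : (0 < n)%N := leq_ltn_trans (leq0n i) (ltn_ord i).
rewrite /charsp -scalemxAr -[n in _ ^+ n](prednK n_gt0).
by rewrite exprSr -mulmxA mulmxBl (mulmx_eigen_col lam_inj u_eigen u_neq0)
  mul_scalar_mx subrr mulmx0 scaler0.
Qed.

Lemma eigen_monomial_of_type a i : is_of_type L lam a (eigen_monomial a i).
Proof.
move=> b t t_ker; rewrite /eigen_monomial scalerA; congr (_ *: _).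
have -> : \sum_j t j = \sum_j 1 *: t j by apply: eq_bigr => j _; rewrite scale1r.
rewrite /monomial -big_split; apply: eq_bigr => j _ /=.
by rewrite !(eigen_coord_sum lam_inj u_eigen _ _ t_ker) mul1r exprMn.
Qed.

Lemma ln_cmod_lam_monomial a :
  ln (cmod (lam_monomial a)) = \sum_j (a j)%:R * ln (cmod (lam j)).
Proof.
rewrite /lam_monomial (big_morph _ (@cmodM R) (Normc.normc1 _)) ln_prod.
  by apply: eq_bigr => j _; rewrite cmodX lnXn // mulr_natl.
by move=> j; rewrite cmodX exprn_gt0.
Qed.

Lemma sub_resonant_eigen_monomial a i (c : C) :
  (0 < \sum_j a j)%N -> lam_monomial a = lam i ->
  sub_resonant_term i a (fun x => c *: eigen_monomial a i x).
Proof.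
move=> deg_a_gt0 resonant; split.
  by exists (\sum_j a j)%N; apply/is_hpolyP/homogeneousZ/homogeneous_eigen_monomial.
split; first by rewrite /eigen_monomial mulmx0 monomial0 // scale0r scaler0.
split=> [x|]; first by rewrite /eigen_monomial scalerA; apply: charsp_eigen_col.
split=> [b t t_ker|].
  by rewrite (eigen_monomial_of_type _ _ _ t_ker) !scalerA [c * _]mulrC.
by rewrite -resonant ln_cmod_lam_monomial.
Qed.

Lemma resonant_decomposition r (f : V -> V) : (0 < r)%N -> homogeneous r f ->
  exists p h : V -> V, SR L lam r p /\ is_hpoly r h /\ forall x, f x = p x + ML L h x.
Proof.
move=> r_gt0 /eigen_monomial_expansion[m [a [c [deg_a f_eq]]]].
pose resonant i l := lam_monomial (a l) == lam i.
(* A non-resonant slot is the zero map; giving it the type of the i-th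
   coordinate turns the sub-resonance inequality into an equality. *)
pose Q i l : V -> V := if resonant i l then fun x => c i l *: eigen_monomial (a l) i x
                       else fun _ => 0.
pose h x := \sum_i \sum_l
  (if resonant i l then 0 else c i l / (lam_monomial (a l) - lam i)) *:
  eigen_monomial (a l) i x.
have Q_sr i l : sub_resonant_term i
    (if resonant i l then a l else fun j => (j == i) : nat) (Q i l).
  rewrite /Q; case: ifP => [/eqP res_il|_]; last exact: sub_resonant_term0.
  by apply: sub_resonant_eigen_monomial; rewrite ?deg_a.
have Q_hom i l : homogeneous r (Q i l).
  rewrite /Q; case: ifP => _; last exact: homogeneous0.
  by rewrite -(deg_a l); apply/homogeneousZ/homogeneous_eigen_monomial.
exists (fun x => \sum_i \sum_l Q i l x), h; split; [split|split].
- by apply/is_hpolyP; do 2![apply: homogeneous_sum => ?].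
- exact: sub_resonance_sum Q_sr _.
- apply/is_hpolyP; apply: homogeneous_sum => i; apply: homogeneous_sum => l.
  by rewrite -(deg_a l); apply/homogeneousZ/homogeneous_eigen_monomial.
move=> x; rewrite f_eq /h ML_sum -big_split; apply: eq_bigr => i _.
rewrite ML_sum -big_split; apply: eq_bigr => l _.
rewrite /= MLZ ML_eigen_monomial scalerA /Q /resonant; case: eqP => [_|nonres].
  by rewrite mul0r scale0r addr0.
by rewrite add0r divfK // subr_eq0; apply/eqP.
Qed.

End Resonance.

Lemma homogeneous_ML (R : realType) n (L : 'M[R[i]]_n) d
    (h : 'cV[R[i]]_n -> 'cV[R[i]]_n) :
  homogeneous d h -> homogeneous d (ML L h).
Proof.
move=> h_hom; apply: eq_homogeneous (homogeneousD (homogeneous_comp_mulmx L h_hom)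
  (homogeneous_linear (mulmx (- L)) h_hom)) => x.
by rewrite /ML /= mulNmx.
Qed.

Lemma eigenvector_of_char_poly (K : fieldType) n (L : 'M[K]_n) (lam : 'I_n -> K) :
  char_poly L = \prod_j ('X - (lam j)%:P) ->
  forall j, exists2 u : 'rV_n, u *m L = lam j *: u & u != 0.
Proof.
move=> charL j; apply/eigenvalueP; rewrite eigenvalue_root_char charL.
by rewrite /root horner_prod (bigD1 j) //= hornerXsubC subrr mul0r.
Qed.

Lemma increasing_inj (R : numDomainType) n (g : 'I_n -> R) :
  (forall j k : 'I_n, (j < k)%N -> g j < g k) -> injective g.
Proof.
move=> g_lt j k gjk; apply: val_inj.
by case: (ltngtP j k) => // jk; have := g_lt _ _ jk; rewrite gjk ltxx.
Qed.

Theorem proposition3p8 (R : realType) (n : nat) (L : 'M[R[i]]_n)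
    (lam : 'I_n -> R[i]) :
  L \in unitmx ->
  char_poly L = \prod_(j < n) ('X - (lam j)%:P) ->
  (forall j, 0 < cmod (lam j)) ->
  (forall j k : 'I_n, (j < k)%N -> cmod (lam j) < cmod (lam k)) ->
  (forall j, cmod (lam j) < 1) ->
  forall r : nat, (1 <= r)%N ->
  forall f : 'cV[R[i]]_n -> 'cV[R[i]]_n,
    is_hpoly r f <->
    exists p h : 'cV[R[i]]_n -> 'cV[R[i]]_n,
      SR L lam r p /\ is_hpoly r h /\ (forall x, f x = p x + ML L h x).
Proof.
move=> _ charL lam_gt0 lam_lt _ r r_gt0 f.
split=> [/is_hpolyP f_hom | [p [h [[/is_hpolyP p_hom _] [/is_hpolyP h_hom f_eq]]]]].
  have lam_inj : injective lam.
    exact: inj_compr (increasing_inj (g := @cmod R \o lam) lam_lt).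
  have [u u_eigen u_neq0] := fin_all_exists2 (eigenvector_of_char_poly charL).
  exact: (resonant_decomposition lam_inj u_eigen u_neq0 lam_gt0 r_gt0 f_hom).
apply/is_hpolyP; apply: eq_homogeneous (homogeneousD p_hom (homogeneous_ML L h_hom)).
by move=> x; rewrite f_eq.
Qed.
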